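(* Let $(X,\|\cdot\|)$ be a normed linear space over $\mathbb{R}$ or $\mathbb{C}$, let $a\in X$ with $a\neq 0$, and let $x_1,\dots,x_n\in X$ satisfy $\|x_j-a\|\le\|a\|$ for each $j\in\{1,\dots,n\}$. Then for any $p_1,\dots,p_n\ge0$ with $\sum_{j=1}^n p_j=1$, $$\Big\|\sum_{j=1}^n p_jx_j\Big\|\,\|a\|+\frac12\sum_{j=1}^n p_j\|x_j\|\,\|x_j-a\|\ \ge\ \frac12\|a\|\sum_{j=1}^n p_j\|x_j\|.$$ *)

From HB Require Import structures.
From mathcomp Require Import all_boot all_order all_algebra.
From mathcomp Require Import all_classical all_reals all_analysis.

From HB Require Import structures.
From mathcomp Require Import all_boot all_order all_algebra.
From mathcomp Require Import all_classical all_reals all_analysis.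
From mathcomp Require Import ring.
Import Order.TTheory GRing.Theory Num.Theory.
Import numFieldNormedType.Exports.
Local Open Scope ring_scope.

(* Write [r_j = |x_j - a|] and [A = |a|].  Since [a] is the convex combination
   [sum p_j x_j] shifted by [sum p_j (a - x_j)], the triangle inequality gives
   [|sum p_j x_j| >= A - sum p_j r_j].  Multiplying by [A], the claim reduces to
   [sum p_j (A - r_j) (2 A - |x_j|) >= 0], which holds termwise because
   [r_j <= A] and [|x_j| <= A + r_j <= 2 A]. *)

Section ConvexWeights.
Context {K : numFieldType} {I : finType} {p : I -> K}.
Hypotheses (p_ge0 : forall i, 0 <= p i) (p_sum1 : \sum_i p i = 1).

Lemma convex_comb_distl {X : normedModType K} (x : I -> X) (a : X) :
  `|\sum_i p i *: x i - a| <= \sum_i p i * `|x i - a|.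
Proof.
have -> : \sum_i p i *: x i - a = \sum_i p i *: (x i - a).
  by rewrite -[a in LHS]scale1r -p_sum1 scaler_suml -sumrB;
     apply: eq_bigr => i _; rewrite scalerBr.
apply: (le_trans (ler_norm_sum _ _ _)); apply: ler_sum => i _.
by rewrite normrZ ger0_norm.
Qed.

Lemma convex_comb_norm_ge {X : normedModType K} (x : I -> X) (a : X) :
  `|a| - \sum_i p i * `|x i - a| <= `|\sum_i p i *: x i|.
Proof.
rewrite lerBlDr.
have := ler_normD (\sum_i p i *: x i) (a - \sum_i p i *: x i).
rewrite addrC subrK => /le_trans; apply.
by rewrite lerD2l distrC convex_comb_distl.
Qed.

Lemma convex_comb_weighted_ineq (A : K) (r y : I -> K) :
  (forall i, 0 <= r i <= A) -> (forall i, y i <= A + r i) ->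
  2^-1 * A * \sum_i p i * y i
    <= (A - \sum_i p i * r i) * A + 2^-1 * \sum_i p i * y i * r i.
Proof.
move=> r_bnd y_bnd; rewrite -subr_ge0.
have -> : (A - \sum_i p i * r i) * A + 2^-1 * \sum_i p i * y i * r i
            - 2^-1 * A * \sum_i p i * y i
          = 2^-1 * \sum_i p i * ((A - r i) * (A + A - y i)).
  rewrite [X in (X - _) * _](_ : A = \sum_i p i * A); last first.
    by rewrite -mulr_suml p_sum1 mul1r.
  rewrite -sumrB mulr_suml !mulr_sumr -big_split -sumrB /=.
  by apply: eq_bigr => i _; field.
apply: mulr_ge0; first by rewrite invr_ge0 ler0n.
apply: sumr_ge0 => i _; apply: mulr_ge0 => //.
have /andP[r_ge0 r_leA] := r_bnd i.
apply: mulr_ge0; rewrite subr_ge0 //.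
by apply: le_trans (y_bnd i) _; rewrite lerD2l.
Qed.

End ConvexWeights.

Theorem proposition2p1 (K : numFieldType) (X : normedModType K) (n : nat)
  (a : X) (x : 'I_n -> X) (p : 'I_n -> K) :
  a != 0 ->
  (forall j, `|x j - a| <= `|a|) ->
  (forall j, 0 <= p j) ->
  \sum_(j < n) p j = 1 ->
  `|\sum_(j < n) p j *: x j| * `|a|
    + 2^-1 * \sum_(j < n) p j * `|x j| * `|x j - a|
  >= 2^-1 * `|a| * \sum_(j < n) p j * `|x j|.
Proof.
move=> _ dist_le p_ge0 p_sum1.
have norm_le j : `|x j| <= `|a| + `|x j - a|.
  by have := ler_normD a (x j - a); rewrite [a + _]addrC subrK.
have dist_bnd j : 0 <= `|x j - a| <= `|a| by rewrite normr_ge0 dist_le.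
have := convex_comb_weighted_ineq p_ge0 p_sum1 `|a|
  (fun j => `|x j - a|) (fun j => `|x j|) dist_bnd norm_le.
move=> /le_trans; apply; rewrite lerD2r.
by have /(ler_wpM2r (normr_ge0 a)) := convex_comb_norm_ge p_ge0 p_sum1 x a.
Qed.
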